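(* There exist absolute constants $c>0$ and $n_0$ such that for every integer $n\ge n_0$ and every $\varepsilon$ with $n^{-1/3} < \varepsilon < 1/2$, there exists an $n$-point set $X \subset \mathbb{R}$ such that every simultaneous $\varepsilon$-coreset of $X$ for $p$-Centrum with $k=1$ has size at least $c\,\varepsilon^{-1/2}\log n$.
   Context: For a finite multiset $Y\subset\mathbb{R}$ and a point $c\in\mathbb{R}$, $\mathrm{cost}_p(Y,c)$ is the sum of the $p$ largest values among $\{|y-c|\}_{y\in Y}$ (with multiplicity; the sum of all of them if $|Y|<p$). A coreset is a finite set of points with positive integer weights, viewed as a multiset; its size is the number of distinct points. A multiset $D\subset \mathbb{R}$ is a simultaneous $\varepsilon$-coreset of $X$ (with $|X|=n$) for $p$-Centrum with $k=1$ if for every $p\in\{1,\dots,n\}$ and every $c\in\mathbb{R}$, $(1-\varepsilon)\mathrm{cost}_p(X,c)\le\mathrm{cost}_p(D,c)\le(1+\varepsilon)\mathrm{cost}_p(X,c)$. *)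

From HB Require Import structures.
From mathcomp Require Import all_boot all_order all_algebra.
From mathcomp Require Import all_classical all_reals all_analysis.
From Stdlib Require Import Rdefinitions.
From mathcomp Require Import Rstruct.
Set Implicit Arguments. Unset Strict Implicit. Unset Printing Implicit Defensive.
Import Order.TTheory GRing.Theory Num.Theory.
Local Open Scope ring_scope.

(* A finite multiset of reals is represented by a sequence (with repetitions);
   a weighted coreset with positive integer weights is the same thing as a multiset,
   and its size (number of distinct points) is [size (undup D)]. *)

Definition cost (p : nat) (Y : seq R) (c : R) : R :=
  \sum_(x <- take p (sort (fun a b : R => b <= a) [seq `|y - c| | y <- Y])) x.

Definition simul_coreset (eps : R) (X D : seq R) : Prop :=
  forall (p : nat) (c : R), leq 1 p -> leq p (size X) ->
    (1 - eps) * cost p X c <= cost p D c /\ cost p D c <= (1 + eps) * cost p X c.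

Definition csize (D : seq R) : nat := size (undup D).

From HB Require Import structures.
From mathcomp Require Import all_boot all_order all_algebra.
From mathcomp Require Import all_classical all_reals all_analysis.
From Stdlib Require Import Rdefinitions.
From mathcomp Require Import Rstruct.
From mathcomp Require Import ring lra zify.
Set Implicit Arguments. Unset Strict Implicit. Unset Printing Implicit Defensive.
Import Order.TTheory GRing.Theory Num.Theory.
Local Open Scope ring_scope.

(* The hard instance is X = (sqrt(i+1) - sqrt i)_(i<n), whose cost about the
   centre 0 is cost_p(X, 0) = sqrt p.  For a multiset D, cost_p(D, 0) is the
   sum of the p largest distances of D to 0, so it is affine in p on any range
   where the sorted distance sequence of D does not change.  An affine function
   cannot stay within a factor 1 +- eps of the concave sqrt p at p = a^2, m^2, b^2
   once (1 + eps)(m - a)(b - m) > 2 eps (a + b) m; hence every window [a^2, b^2]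
   of this kind contains a change of the distance sequence, and pairwise disjoint
   windows force as many distinct points in D.  With x = eps^(-1/2), windows
   [(s g)^2, ((s + 2) g)^2] with s between x/16 and 3x/16 and g a power of 4 give
   of order (x/16) log_16 n disjoint windows; when x < 16 the windows
   [64^(2t), 64^(2t+2)] give log_4096 n of them. *)

Lemma sum_take_nth (V : nmodType) (w : seq V) (p : nat) :
  \sum_(x <- take p w) x = \sum_(i < p) w`_i.
Proof.
elim: w p => [|x w IH] [|p] /=; rewrite ?big_nil ?big_ord0 //.
  by rewrite big1 // => i _; rewrite nth_nil.
by rewrite big_cons big_ord_recl IH.
Qed.

Definition dists (D : seq R) (c : R) : seq R := sort >=%R [seq `|y - c| | y <- D].

Lemma cost_dists p D c : cost p D c = \sum_(i < p) (dists D c)`_i.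
Proof. exact: sum_take_nth. Qed.

Lemma dists_sorted D c : sorted >=%R (dists D c).
Proof. by apply: sort_sorted => x y; exact: le_total. Qed.

Lemma nth_dists_ge0 D c i : 0 <= (dists D c)`_i.
Proof.
have [lt_i|le_i] := ltnP i (size (dists D c)); last by rewrite nth_default.
by move: (mem_nth 0 lt_i); rewrite mem_sort => /mapP[y _ ->].
Qed.

(* Past the end [nth] returns 0, which lies below every distance. *)
Lemma nth_dists_nonincr D c :
  {homo nth 0 (dists D c) : j k / leq j k >-> j >= k}.
Proof.
move=> j k le_jk; have [lt_k|le_k] := ltnP k (size (dists D c)).
  apply: (sorted_leq_nth (rev_trans le_trans) lexx 0 (dists_sorted D c)) => //.
  by rewrite inE (leq_ltn_trans le_jk).
by rewrite [X in X <= _]nth_default // nth_dists_ge0.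
Qed.

Lemma size_undup_dists D c : (size (undup (dists D c)) <= csize D)%nat.
Proof.
rewrite /csize -(size_map (fun y => `|y - c|) (undup D)).
apply: uniq_leq_size; first exact: undup_uniq.
move=> x; rewrite mem_undup mem_sort => /mapP[y yD ->].
by apply: map_f; rewrite mem_undup.
Qed.

Definition drop_within (w : seq R) (lo hi : nat) : Prop :=
  exists i, [/\ (lo <= i)%nat, (i.+1 < hi)%nat & w`_i != w`_i.+1].

Lemma windows_le_size_undup (w : seq R) (K : nat) (lo hi : nat -> nat) :
  {homo nth 0 w : j k / leq j k >-> j >= k} ->
  (forall t, (t < K)%nat -> drop_within w (lo t) (hi t)) ->
  (forall t t', (t < t' < K)%nat -> (hi t <= lo t')%nat) ->
  (K <= size (undup w))%nat.
Proof.
move=> w_nonincr w_drop disjoint.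
have lt_lo t t' : (t < t' < K)%nat -> w`_(lo t') < w`_(lo t).
  move=> /andP[lt_tt' lt_t'K].
  have [i [le_lo_i lt_i_hi ne_i]] := w_drop t (ltn_trans lt_tt' lt_t'K).
  have le_i_lo' : (i.+1 <= lo t')%nat by rewrite (leq_trans (ltnW lt_i_hi)) ?disjoint ?lt_tt'.
  apply: le_lt_trans (w_nonincr _ _ le_i_lo') _.
  by apply: lt_le_trans (w_nonincr _ _ le_lo_i); rewrite lt_neqAle eq_sym ne_i w_nonincr.
have lo_in_w t : (t < K)%nat -> w`_(lo t) \in w.
  move=> lt_tK; have [i [le_lo_i _ ne_i]] := w_drop t lt_tK.
  apply: mem_nth; rewrite (leq_ltn_trans le_lo_i) //; apply: contraR ne_i.
  by rewrite -leqNgt => le_w_i; rewrite !nth_default // (leq_trans le_w_i).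
have uniq_vals : uniq [seq w`_(lo t) | t <- iota 0 K].
  rewrite map_inj_in_uniq ?iota_uniq // => t t'; rewrite !mem_iota /= => lt_tK lt_t'K eq_w.
  have [lt|lt|//] := ltngtP t t'.
  - by have := lt_lo t t'; rewrite lt lt_t'K eq_w ltxx => /(_ isT).
  - by have := lt_lo t' t; rewrite lt lt_tK eq_w ltxx => /(_ isT).
rewrite -(size_iota 0 K) -(size_map (fun t => w`_(lo t))).
apply: uniq_leq_size uniq_vals _ => x /mapP[t]; rewrite mem_iota mem_undup => lt_tK ->.
exact: lo_in_w.
Qed.

Definition sqrt_gap (i : nat) : R := Num.sqrt i.+1%:R - Num.sqrt i%:R.

Definition sqrt_gaps (n : nat) : seq R := [seq sqrt_gap i | i <- iota 0 n].

Lemma sqrt_gapE i : sqrt_gap i = (Num.sqrt i.+1%:R + Num.sqrt i%:R)^-1.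
Proof.
have pos_sum : 0 < Num.sqrt i.+1%:R + Num.sqrt (i%:R : R).
  by rewrite ltr_wpDr ?sqrtr_ge0 // sqrtr_gt0.
have gap_times_sum : sqrt_gap i * (Num.sqrt i.+1%:R + Num.sqrt i%:R) = 1.
  by rewrite /sqrt_gap -subr_sqr !sqr_sqrtr // -natr1 addrAC subrr add0r.
by apply: (mulIf (lt0r_neq0 pos_sum)); rewrite gap_times_sum mulVf ?lt0r_neq0.
Qed.

Lemma sqrt_gap_gt0 i : 0 < sqrt_gap i.
Proof. by rewrite subr_gt0 ltr_sqrt ?ltr_nat. Qed.

Lemma sqrt_gap_decr : {homo sqrt_gap : i j / (i < j)%nat >-> j < i}.
Proof.
have pos_sum k : Num.sqrt k.+1%:R + Num.sqrt k%:R \is @Num.pos R.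
  by rewrite posrE ltr_wpDr ?sqrtr_ge0 // sqrtr_gt0.
move=> i j lt_ij; rewrite !sqrt_gapE ltf_pV2 ?pos_sum //.
by apply: ltrD; rewrite ltr_sqrt ?ltr_nat ?ltr0n // (leq_ltn_trans _ lt_ij).
Qed.

Lemma sorted_sqrt_gaps n : sorted >%R (sqrt_gaps n).
Proof.
rewrite sorted_map; apply: sub_sorted (iota_ltn_sorted 0 n) => i j.
exact: sqrt_gap_decr.
Qed.

Lemma uniq_sqrt_gaps n : uniq (sqrt_gaps n).
Proof.
apply: sorted_uniq (sorted_sqrt_gaps n); first exact: rev_trans lt_trans.
by move=> x; rewrite /= ltxx.
Qed.

Lemma size_sqrt_gaps n : size (sqrt_gaps n) = n.
Proof. by rewrite size_map size_iota. Qed.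

Lemma dists_sqrt_gaps0 n : dists (sqrt_gaps n) 0 = sqrt_gaps n.
Proof.
rewrite /dists; have -> : [seq `|y - 0| | y <- sqrt_gaps n] = sqrt_gaps n.
  by rewrite -map_comp; apply: eq_map => i /=; rewrite subr0 gtr0_norm ?sqrt_gap_gt0.
apply: sorted_sort; first exact: rev_trans le_trans.
by apply: sub_sorted (sorted_sqrt_gaps n) => x y /ltW.
Qed.

Lemma cost_sqrt_gaps0 n p : (p <= n)%nat -> cost p (sqrt_gaps n) 0 = Num.sqrt p%:R.
Proof.
move=> le_pn; rewrite cost_dists dists_sqrt_gaps0.
rewrite (eq_bigr (fun i : 'I_p => sqrt_gap i)) => [|i _]; last first.
  by rewrite (nth_map 0%nat) ?nth_iota ?size_iota // (leq_trans (ltn_ord i)).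
rewrite -(big_mkord xpredT sqrt_gap) telescope_sumr //.
by rewrite sqrtr0 subr0.
Qed.

Lemma sum_nth_no_drop (w : seq R) (lo hi p : nat) :
  ~ drop_within w lo hi -> (lo <= p <= hi)%nat ->
  \sum_(i < p) w`_i = \sum_(i < lo) w`_i + (p - lo)%:R * w`_lo.
Proof.
move=> no_drop /andP[le_lo le_hi].
have const j : (lo + j < hi)%nat -> w`_(lo + j) = w`_lo.
  elim: j => [|j IHj] lt_hi; first by rewrite addn0.
  rewrite -IHj ?(ltn_trans _ lt_hi) ?ltn_add2l // addnS.
  apply/esym/eqP/negPn/negP => ne; apply: no_drop.
  by exists (lo + j)%nat; split; rewrite ?leq_addr // -addnS.
have affine k : (lo + k <= hi)%nat ->
    \sum_(i < lo + k) w`_i = \sum_(i < lo) w`_i + k%:R * w`_lo.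
  elim: k => [|k IH] le_k; first by rewrite addn0 mul0r addr0.
  have lt_hi : (lo + k < hi)%nat by rewrite -addnS.
  rewrite addnS big_ord_recr /= IH ?const ?(ltnW lt_hi) //.
  by rewrite -natr1 mulrDl mul1r addrA.
by have := affine (p - lo)%nat; rewrite subnKC // => ->.
Qed.

(* [ga], [gm], [gb] are the values at [a^2], [m^2], [b^2] of a function that is
   affine on [[a^2, b^2]]. *)
Lemma affine_near_sqrt_bound (e a m b ga gm gb : R) :
  0 < a -> a < m -> m < b ->
  (b ^+ 2 - a ^+ 2) * gm = (b ^+ 2 - m ^+ 2) * ga + (m ^+ 2 - a ^+ 2) * gb ->
  ga <= (1 + e) * a -> (1 - e) * m <= gm -> gb <= (1 + e) * b ->
  (1 + e) * (m - a) * (b - m) <= 2 * e * (a + b) * m.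
Proof.
move=> a_gt0 lt_am lt_mb interp ga_le gm_ge gb_le.
have lt_ab : 0 < b - a by lra.
have sqr_gap (x y : R) : 0 < x < y -> 0 <= y ^+ 2 - x ^+ 2.
  by case/andP=> x_gt0 lt_xy; nra.
have ge_bm := sqr_gap m b; have ge_ma := sqr_gap a m; have ge_ba := sqr_gap a b.
have lower : (1 - e) * m * (b ^+ 2 - a ^+ 2) <= (b ^+ 2 - a ^+ 2) * gm.
  by rewrite mulrC ler_wpM2l ?ge_ba ?a_gt0 ?(lt_trans lt_am).
have upper_a : (b ^+ 2 - m ^+ 2) * ga <= (b ^+ 2 - m ^+ 2) * ((1 + e) * a).
  by rewrite ler_wpM2l ?ge_bm ?lt_mb ?(lt_trans a_gt0).
have upper_b : (m ^+ 2 - a ^+ 2) * gb <= (m ^+ 2 - a ^+ 2) * ((1 + e) * b).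
  by rewrite ler_wpM2l ?ge_ma ?a_gt0.
have gapE : (1 + e) * (m - a) * (b - m) * (b - a) = (1 + e) * m * (b ^+ 2 - a ^+ 2)
    - ((b ^+ 2 - m ^+ 2) * ((1 + e) * a) + (m ^+ 2 - a ^+ 2) * ((1 + e) * b)) by ring.
have slackE : 2 * e * (a + b) * m * (b - a)
    = (1 + e) * m * (b ^+ 2 - a ^+ 2) - (1 - e) * m * (b ^+ 2 - a ^+ 2) by ring.
rewrite -(ler_pM2r lt_ab); lra.
Qed.

Lemma prefix_dists_near_sqrt (eps : R) (n : nat) (D : seq R) (p : nat) :
  simul_coreset eps (sqrt_gaps n) D -> (0 < p)%nat -> (p <= n)%nat ->
  (1 - eps) * Num.sqrt p%:R <= \sum_(i < p) (dists D 0)`_i <= (1 + eps) * Num.sqrt p%:R.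
Proof.
move=> coreset p_gt0 le_pn; have := coreset p 0 p_gt0.
by rewrite size_sqrt_gaps cost_sqrt_gaps0 // cost_dists => /(_ le_pn) [? ?]; apply/andP.
Qed.

Lemma coreset_drop_within (eps : R) (n : nat) (D : seq R) (a m b g : nat) :
  simul_coreset eps (sqrt_gaps n) D ->
  (0 < a)%nat -> (a < m)%nat -> (m < b)%nat -> (0 < g)%nat -> (expn (b * g) 2 <= n)%nat ->
  2 * eps * (a%:R + b%:R) * m%:R < (1 + eps) * (m%:R - a%:R) * (b%:R - m%:R) ->
  drop_within (dists D 0) (expn (a * g) 2) (expn (b * g) 2).
Proof.
move=> coreset a_gt0 lt_am lt_mb g_gt0 le_n window; apply: contrapT => no_drop.
pose G p := \sum_(i < p) (dists D 0)`_i.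
have le_sq j k : (j <= k)%nat -> (expn (j * g) 2 <= expn (k * g) 2)%nat.
  by move=> le_jk; rewrite leq_exp2r // leq_mul2r le_jk orbT.
have G_near_sqrt k : (0 < k)%nat -> (k <= b)%nat ->
    (1 - eps) * (k%:R * g%:R) <= G (expn (k * g) 2) <= (1 + eps) * (k%:R * g%:R).
  move=> k_gt0 le_kb; rewrite -[k%:R * _]ger0_norm // -natrM -sqrtr_sqr -natrX.
  apply: prefix_dists_near_sqrt coreset _ (leq_trans (le_sq _ _ le_kb) le_n).
  by rewrite expn_gt0 muln_gt0 k_gt0 g_gt0.
set v := (dists D 0)`_(expn (a * g) 2).
have G_affine k : (a <= k)%nat -> (k <= b)%nat ->
    G (expn (k * g) 2) = G (expn (a * g) 2) + ((k%:R * g%:R) ^+ 2 - (a%:R * g%:R) ^+ 2) * v.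
  move=> le_ak le_kb; rewrite /G (sum_nth_no_drop no_drop) ?le_sq //.
  by rewrite natrB ?le_sq // !natrX !natrM.
have lt_ab := ltn_trans lt_am lt_mb.
have /andP[_ ga_le] := G_near_sqrt a a_gt0 (ltnW lt_ab).
have /andP[gm_ge _] := G_near_sqrt m (ltn_trans a_gt0 lt_am) (ltnW lt_mb).
have /andP[_ gb_le] := G_near_sqrt b (ltn_trans a_gt0 lt_ab) (leqnn b).
rewrite G_affine ?(ltnW lt_am) ?(ltnW lt_mb) // in gm_ge.
rewrite G_affine ?(ltnW lt_ab) // in gb_le.
have g_gt0R : 0 < (g%:R : R) by rewrite ltr0n.
have scaled_lt (j k : nat) : (j < k)%nat -> j%:R * g%:R < k%:R * (g%:R : R).
  by move=> lt_jk; rewrite ltr_pM2r // ltr_nat.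
have ag_gt0 : 0 < a%:R * (g%:R : R) by rewrite mulr_gt0 ?ltr0n.
set ga := G _ in ga_le gm_ge gb_le.
set ag := a%:R * g%:R in ga_le gm_ge gb_le ag_gt0.
set mg := m%:R * g%:R in gm_ge; set bg := b%:R * g%:R in gb_le.
have interp : (bg ^+ 2 - ag ^+ 2) * (ga + (mg ^+ 2 - ag ^+ 2) * v)
    = (bg ^+ 2 - mg ^+ 2) * ga + (mg ^+ 2 - ag ^+ 2) * (ga + (bg ^+ 2 - ag ^+ 2) * v) by ring.
have := affine_near_sqrt_bound ag_gt0 (scaled_lt _ _ lt_am) (scaled_lt _ _ lt_mb)
  interp ga_le gm_ge gb_le.
have scaled_slack : 2 * eps * (ag + bg) * mg = 2 * eps * (a%:R + b%:R) * m%:R * g%:R ^+ 2.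
  by rewrite /ag /bg /mg; ring.
have scaled_gap : (1 + eps) * (mg - ag) * (bg - mg)
    = (1 + eps) * (m%:R - a%:R) * (b%:R - m%:R) * g%:R ^+ 2 by rewrite /ag /bg /mg; ring.
by rewrite scaled_slack scaled_gap ler_pM2r ?exprn_gt0 // leNgt window.
Qed.

Lemma trunc_log_le_csize (eps : R) (n : nat) (D : seq R) : 0 <= eps -> eps < 1 / 2 -> (0 < n)%nat ->
  simul_coreset eps (sqrt_gaps n) D -> (trunc_log 4096 n <= csize D)%nat.
Proof.
move=> eps_ge0 eps_lt n_gt0 coreset; apply: leq_trans (size_undup_dists D 0).
have sq64 t : expn (64 * expn 64 t) 2 = expn 4096 t.+1 by rewrite -expnS -expnM mulnC expnM.
apply: (windows_le_size_undup (lo := fun t => expn (1 * expn 64 t) 2)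
  (hi := fun t => expn (64 * expn 64 t) 2) (nth_dists_nonincr D 0)).
- move=> t lt_tT.
  apply: (coreset_drop_within (a := 1) (m := 8) (b := 64) (g := expn 64 t) coreset) => //.
  + by rewrite expn_gt0.
  + rewrite sq64; apply: leq_trans (@trunc_logP 4096 n isT n_gt0).
    by rewrite leq_pexp2l.
  + lra.
- move=> t t' /andP[lt_tt' _]; rewrite sq64 mul1n -expnM mulnC expnM.
  by rewrite leq_pexp2l.
Qed.

(* Window [t] is [[(s g)^2, ((s + 2) g)^2]] with [s = fine_offset r t] and
   [g = fine_scale r t]: blocks of [r] windows, [s = r, r + 2, ..., 3r - 2], at
   scales [g = 1, 4, 16, ...]; the next block starts at [4 r g >= (3r) g]. *)
Definition fine_offset (r t : nat) : nat := r + 2 * (t %% r).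

Definition fine_scale (r t : nat) : nat := expn 4 (t %/ r).

Lemma fine_offset_bounds r t : (0 < r)%nat ->
  (r <= fine_offset r t)%nat /\ (fine_offset r t + 2 <= 3 * r)%nat.
Proof. by move=> r_gt0; have := ltn_pmod t r_gt0; rewrite /fine_offset; lia. Qed.

Lemma fine_windows_ordered r t t' : (0 < r)%nat -> (t < t')%nat ->
  ((fine_offset r t + 2) * fine_scale r t <= fine_offset r t' * fine_scale r t')%nat.
Proof.
move=> r_gt0 lt_tt'; have [_ off_le] := fine_offset_bounds t r_gt0.
have [off'_ge _] := fine_offset_bounds t' r_gt0.
have /orP[/eqP same_block | lt_block] : ((t %/ r == t' %/ r) || (t %/ r < t' %/ r))%nat.
  by rewrite -leq_eqVlt leq_div2r // ltnW.
- rewrite /fine_scale same_block leq_pmul2r ?expn_gt0 // /fine_offset.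
  have := divn_eq t r; have := divn_eq t' r; rewrite same_block; lia.
- apply: (@leq_trans (3 * r * fine_scale r t)); first by rewrite leq_mul2r off_le orbT.
  apply: (@leq_trans (r * fine_scale r t')); last by rewrite leq_mul2r off'_ge orbT.
  rewrite /fine_scale -mulnA mulnCA leq_pmul2l //.
  apply: (@leq_trans (expn 4 (t %/ r).+1)); first by rewrite expnS leq_mul2r orbT.
  by rewrite leq_pexp2l.
Qed.

Lemma fine_windows_le_csize (eps : R) (n : nat) (D : seq R) (r L : nat) :
  0 < eps -> (0 < r)%nat -> 36 * eps * r%:R ^+ 2 <= 1 ->
  (9 * expn r 2 * expn 16 L <= n)%nat -> simul_coreset eps (sqrt_gaps n) D ->
  (r * L <= csize D)%nat.
Proof.
move=> eps_gt0 r_gt0 eps_small le_n coreset; apply: leq_trans (size_undup_dists D 0).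
apply: (windows_le_size_undup (lo := fun t => expn (fine_offset r t * fine_scale r t) 2)
    (hi := fun t => expn ((fine_offset r t + 2) * fine_scale r t) 2) (nth_dists_nonincr D 0));
  last first.
  move=> t t' /andP[lt_tt' _]; rewrite leq_exp2r //; exact: fine_windows_ordered.
move=> t lt_tK; have [off_ge off_le] := fine_offset_bounds t r_gt0.
set s := fine_offset r t in off_ge off_le *.
apply: (coreset_drop_within (a := s) (m := s.+1) (b := s + 2) (g := fine_scale r t) coreset).
- exact: leq_trans r_gt0 off_ge.
- by [].
- by rewrite addn2.
- by rewrite expn_gt0.
- rewrite expnMn; apply: leq_trans le_n; apply: leq_mul.
    by rewrite -[9%nat]/(expn 3 2) -expnMn leq_exp2r.
  rewrite /fine_scale -expnM mulnC expnM leq_pexp2l //.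
  by rewrite ltnW // ltn_divLR // mulnC.
- have lt_sq : (s%:R + 1) ^+ 2 < 9 * (r%:R : R) ^+ 2.
    have : (expn s.+1 2 < expn (3 * r) 2)%nat by rewrite ltn_exp2r //; lia.
    by rewrite -(ltr_nat R) !natrX natrM -natr1 exprMn; lra.
  rewrite -(ltr_pM2l eps_gt0) in lt_sq.
  clearbody s; rewrite -[s.+1]addn1 !natrD; lra.
Qed.

Lemma ln_lt_mul_exp2n (N q k : nat) : (0 < N)%nat -> (0 < q)%nat ->
  (N < q * expn 2 k)%nat -> ln (N%:R : R) < ln q%:R + k%:R.
Proof.
move=> N_gt0 q_gt0 lt_N; have ln2_le1 : ln (2 : R) <= 1.
  by have := @le_ln1Dx R 1; rewrite -mulr2n; apply; lra.
apply: (@lt_le_trans _ _ (ln (q * expn 2 k)%:R)).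
  by rewrite ltr_ln ?posrE ?ltr0n ?ltr_nat // (ltn_trans N_gt0).
rewrite natrM natrX lnM ?posrE ?exprn_gt0 ?ltr0n // lnXn // lerD2l.
exact: ler_wMn2r ln2_le1.
Qed.

Lemma coarse_lower_bound (eps x : R) (n : nat) (D : seq R) :
  (4096 <= n)%nat -> 0 <= eps -> eps < 1 / 2 -> 0 <= x -> x <= 16 ->
  simul_coreset eps (sqrt_gaps n) D -> x * ln n%:R <= 400 * (csize D)%:R.
Proof.
move=> le_n eps_ge0 eps_lt x_ge0 x_le coreset; have n_gt0 : (0 < n)%nat by apply: leq_trans le_n.
set T := trunc_log 4096 n.
have T_le : (T%:R : R) <= (csize D)%:R.
  by rewrite ler_nat (trunc_log_le_csize eps_ge0 eps_lt n_gt0 coreset).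
have T_ge1 : (1 <= T%:R :> R) by rewrite ler1n trunc_log_max.
have ln_n_lt : ln (n%:R : R) < 12 * T.+1%:R.
  have := ln_lt_mul_exp2n (q := 1) (k := 12 * T.+1) n_gt0 isT.
  by rewrite mul1n expnM -[expn 2 12]/(4096%nat) trunc_log_ltn // ln1 add0r natrM => /(_ isT).
have ln_n_ge0 : 0 <= ln (n%:R : R) by rewrite ln_ge0 // ler1n.
have : x * ln n%:R <= 16 * ln n%:R by rewrite ler_wpM2r.
rewrite -natr1 in ln_n_lt; lra.
Qed.

Lemma ln_lt_trunc_log_div (n q : nat) : (0 < q)%nat -> (expn q 3 < n)%nat ->
  ln (n%:R : R) < 6 * (trunc_log 16 (n %/ q)).+1%:R.
Proof.
move=> q_gt0 q3_lt_n; have n_gt0 : (0 < n)%nat by apply: leq_ltn_trans q3_lt_n.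
set k := (trunc_log 16 (n %/ q)).+1.
have ln_n_lt : ln (n%:R : R) < ln q%:R + (4 * k)%:R.
  apply: ln_lt_mul_exp2n => //; rewrite expnM -[expn 2 4]/(16%nat).
  apply: leq_trans (ltn_ceil n q_gt0) _; rewrite mulnC leq_mul2l.
  by rewrite trunc_log_ltn ?orbT.
have ln_q3_lt : ln ((expn q 3)%:R : R) < ln n%:R.
  by rewrite ltr_ln ?posrE ?ltr0n ?ltr_nat ?expn_gt0 ?q_gt0.
rewrite natrX lnXn ?ltr0n // natrM in ln_q3_lt ln_n_lt; lra.
Qed.

Lemma fine_lower_bound (eps x : R) (n : nat) (D : seq R) :
  (4096 <= n)%nat -> 0 < eps -> x ^+ 2 * eps = 1 -> 16 <= x -> x ^+ 6 < n%:R ->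
  simul_coreset eps (sqrt_gaps n) D -> x * ln n%:R <= 400 * (csize D)%:R.
Proof.
move=> le_n eps_gt0 x2_eps x_ge x6_lt coreset.
(* [r ~ x / 16] keeps [36 eps r^2 <= 1], and [q = (3r)^2] bounds the squared
   right ends of the windows at scale 1. *)
set r := Num.trunc (x / 16).
have r_le : (r%:R : R) <= x / 16 by rewrite truncn_le; lra.
have r_gt : x / 16 < r%:R + 1 by rewrite natr1 -truncn_le_nat.
have r_gt0 : (0 < r)%nat by rewrite lt0n; apply/eqP => r0; move: r_gt; rewrite r0; lra.
have r2_le : (r%:R : R) ^+ 2 <= (x / 16) ^+ 2 by rewrite lerXn2r ?nnegrE ?ler0n //; lra.
set q := (9 * expn r 2)%nat.
have q_gt0 : (0 < q)%nat by rewrite muln_gt0 expn_gt0 r_gt0.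
have q3_lt_n : (expn q 3 < n)%nat.
  have x2_gt0 : 0 < x ^+ 2 by rewrite exprn_gt0 //; lra.
  have q_lt : (q%:R : R) < x ^+ 2 by rewrite natrM natrX; lra.
  rewrite -(ltr_nat R) natrX; apply: lt_trans x6_lt; rewrite -[6%nat]/(2 * 3)%nat exprM.
  by rewrite ltrXn2r ?nnegrE ?ler0n ?ltW.
have le_qn : (256 * q <= n)%nat.
  have [lt_q|le_q] := ltnP q 16.
    by apply: leq_trans le_n; rewrite -[4096%nat]/(256 * 16)%nat leq_mul2l ltnW ?orbT.
  rewrite -[expn q 3]/(q * (q * q))%nat in q3_lt_n; nia.
set L := trunc_log 16 (n %/ q).
have L_ge2 : (2 <= L)%nat by rewrite trunc_log_max // leq_divRL.
have count : (r * L <= csize D)%nat.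
  apply: (fine_windows_le_csize eps_gt0 r_gt0 _ _ coreset).
    have := ler_wpM2l (ltW eps_gt0) r2_le; lra.
  have nq_gt0 : (0 < n %/ q)%nat by rewrite divn_gt0 // (leq_trans _ le_qn) // leq_pmull.
  apply: leq_trans (leq_mul (leqnn q) (trunc_logP _ nq_gt0)) _ => //.
  by rewrite mulnC leq_trunc_div.
have ln_n_lt : ln (n%:R : R) < 6 * (L%:R + 1).
  by rewrite natr1; exact: ln_lt_trunc_log_div.
have r_ge1 : 1 <= (r%:R : R) by rewrite ler1n.
have L_ge2R : 2 <= (L%:R : R) by rewrite ler_nat.
have ln_n_ge0 : 0 <= ln (n%:R : R) by rewrite ln_ge0 // ler1n (leq_trans _ le_qn) // muln_gt0.
have : x * ln n%:R <= (32 * r%:R) * (9 * L%:R).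
  apply: ler_pM => //; lra.
have rL_ge0 : 0 <= (r%:R : R) * L%:R by rewrite mulr_ge0.
move: count; rewrite -(ler_nat R) natrM; lra.
Qed.

Lemma expr_powR_Ninv (y : R) (k : nat) : 0 < y -> (y `^ (- (1 / k.+1%:R))) ^+ k.+1 = y^-1.
Proof.
move=> y_gt0; rewrite -powR_mulrn ?powR_ge0 // -powRrM mulNr div1r mulVf ?pnatr_eq0 //.
by rewrite powR_inv1 ?ltW.
Qed.

Lemma inv_sqrt_eps_facts (n : nat) (eps : R) : (0 < n)%nat -> n%:R `^ (- (1 / 3)) < eps ->
  [/\ 0 < eps, 0 < eps `^ (- (1 / 2)), (eps `^ (- (1 / 2))) ^+ 2 * eps = 1
    & (eps `^ (- (1 / 2))) ^+ 6 < n%:R].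
Proof.
move=> n_gt0 lt_eps; have n_gt0R : 0 < (n%:R : R) by rewrite ltr0n.
have eps_gt0 : 0 < eps by apply: lt_trans lt_eps; exact: powR_gt0.
have x2E : (eps `^ (- (1 / 2))) ^+ 2 = eps^-1 := expr_powR_Ninv 1 eps_gt0.
have n3E : (n%:R `^ (- (1 / 3))) ^+ 3 = n%:R^-1 := expr_powR_Ninv 2 n_gt0R.
split; rewrite ?powR_gt0 // ?x2E ?mulVf ?gt_eqF //.
rewrite -[6%nat]/(2 * 3)%nat exprM x2E exprVn -ltf_pV2 ?posrE ?invr_gt0 ?exprn_gt0 // invrK.
by rewrite -n3E ltrXn2r ?nnegrE ?powR_ge0 ?ltW.
Qed.

Theorem theorem4p9 :
  exists (c : R) (n0 : nat), 0 < c /\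
    forall (n : nat) (eps : R), leq n0 n ->
      (n%:R : R) `^ (- (1 / 3)) < eps -> eps < 1 / 2 ->
      exists X : seq R, uniq X /\ size X = n /\
        forall D : seq R, simul_coreset eps X D ->
          c * (eps `^ (- (1 / 2)) * ln (n%:R : R)) <= (csize D)%:R.
Proof.
exists (1 / 400), 4096%nat; split=> [|n eps le_n lt_eps eps_lt]; first lra.
have n_gt0 : (0 < n)%nat by apply: leq_trans le_n.
have [eps_gt0 x_gt0 x2_eps x6_lt] := inv_sqrt_eps_facts n_gt0 lt_eps.
exists (sqrt_gaps n); split; first exact: uniq_sqrt_gaps.
split=> [|D coreset]; first exact: size_sqrt_gaps.
suff : eps `^ (- (1 / 2)) * ln n%:R <= 400 * (csize D)%:R by lra.
have [x_ge|x_lt] := lerP 16 (eps `^ (- (1 / 2))).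
- exact: fine_lower_bound le_n eps_gt0 x2_eps x_ge x6_lt coreset.
- exact: coarse_lower_bound le_n (ltW eps_gt0) eps_lt (ltW x_gt0) (ltW x_lt) coreset.
Qed.
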